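(* Let $n\ge2$, let $K\subset\mathbb{R}^n$ be compact and $f:K\to\mathbb{R}^m$ continuous. For any $\epsilon>0$ there exists $F:\mathbb{R}^n\to\mathbb{R}^m$ such that (1) $F$ is the feedforward function of a radial neural network with $2M(f,K,\epsilon/2)$ hidden layers whose widths are all $\max(n,m)$, and (2) $|F(x)-f(x)|<\epsilon$ for all $x\in K$.
   Context: $B_r(c)$ is the open ball. $M(f,K,\delta)$ is the minimal $M$ for which there exist $c_1,\dots,c_M\in K$, $r_1,\dots,r_M\in(0,1)$ with $K\subseteq\bigcup_iB_{r_i}(c_i)$, $f(B_{r_i}(c_i)\cap K)\subseteq B_\delta(f(c_i))$ for all $i$, and $|c_i-c_j|\ge r_i$ for all $i\ne j$. For $h:\mathbb{R}\to\mathbb{R}$ piecewise differentiable, the radial rescaling function $h^{(k)}(v)=h(|v|)v/|v|$ ($v\ne0$), $h^{(k)}(0)=0$. A radial neural network with widths $(n_0,\dots,n_L)$ has weights $W_i\in\mathbb{R}^{n_i\times n_{i-1}}$, biases $b_i$, radial rescaling functions $\rho_i$ on $\mathbb{R}^{n_i}$; hidden layers are $1,\dots,L-1$; feedforward function $F=F_L$, $F_0=\mathrm{id}$, $F_i(x)=\rho_i(W_iF_{i-1}(x)+b_i)$. *)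

From HB Require Import structures.
From mathcomp Require Import all_boot all_order all_algebra.
From mathcomp Require Import all_classical all_reals all_analysis.
Set Implicit Arguments. Unset Strict Implicit. Unset Printing Implicit Defensive.
Import Order.TTheory GRing.Theory Num.Theory.
Import numFieldNormedType.Exports.
Local Open Scope classical_set_scope.
Local Open Scope ring_scope.

Section RadialDefs.
Variable R : realType.

Definition enorm (k : nat) (v : 'cV[R]_k) : R :=
  Num.sqrt (\sum_(i < k) v i ord0 ^+ 2).

Definition eball (k : nat) (c : 'cV[R]_k) (r : R) : set 'cV[R]_k :=
  [set x | enorm (x - c) < r].

Definition cover_ok (n m : nat) (f : 'cV[R]_n -> 'cV[R]_m)
    (K : set 'cV[R]_n) (delta : R) (M : nat) : Prop :=
  exists (c : 'I_M -> 'cV[R]_n) (r : 'I_M -> R),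
    [/\ (forall i, K (c i)),
        (forall i, 0 < r i < 1),
        K `<=` \bigcup_(i in [set: 'I_M]) eball (c i) (r i),
        (forall i, f @` (eball (c i) (r i) `&` K) `<=` eball (f (c i)) delta) &
        (forall i j, i != j -> r i <= enorm (c i - c j))].

(* M(f,K,delta): the minimal admissible M (0 by convention if none exists) *)
Definition Mcover (n m : nat) (f : 'cV[R]_n -> 'cV[R]_m)
    (K : set 'cV[R]_n) (delta : R) : nat :=
  match pselect (exists M, cover_ok f K delta M) with
  | left H =>
      @ex_minn (fun M => `[< cover_ok f K delta M >])
        (let: ex_intro M HM := H in ex_intro _ M (asboolT HM))
  | right _ => 0%N
  end.

Definition piecewise_diff (h : R -> R) : Prop :=
  exists s : seq R, forall x, x \notin s -> derivable h x 1.

Definition radial (k : nat) (h : R -> R) (v : 'cV[R]_k) : 'cV[R]_k :=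
  if v == 0 then 0 else (h (enorm v) / enorm v) *: v.

Record rlayer (a b : nat) := RLayer {
  rl_W : 'M[R]_(b, a);
  rl_b : 'cV[R]_b;
  rl_h : R -> R;
  rl_hP : piecewise_diff rl_h }.

Definition rlayer_eval (a b : nat) (l : rlayer a b) (x : 'cV[R]_a) : 'cV[R]_b :=
  radial (rl_h l) (rl_W l *m x + rl_b l).

Inductive rnet : nat -> nat -> Type :=
| RNLast a b : rlayer a b -> rnet a b
| RNCons a b c : rlayer a b -> rnet b c -> rnet a c.

Fixpoint rnet_eval (a b : nat) (N : rnet a b) : 'cV[R]_a -> 'cV[R]_b :=
  match N in rnet a b return 'cV[R]_a -> 'cV[R]_b with
  | RNLast _ _ l => rlayer_eval l
  | RNCons _ _ _ l N' => fun x => rnet_eval N' (rlayer_eval l x)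
  end.

Fixpoint rnet_widths (a b : nat) (N : rnet a b) : seq nat :=
  match N with
  | RNLast a b _ => [:: a; b]
  | RNCons a _ _ _ N' => a :: rnet_widths N'
  end.

(* hidden-layer widths (n_1, ..., n_{L-1}) *)
Definition hidden_widths (a b : nat) (N : rnet a b) : seq nat :=
  let w := behead (rnet_widths N) in take (size w).-1 w.

End RadialDefs.

(* Take an admissible cover of K by M = M(f, K, eps/2) balls B_{r_i}(c_i) (one exists
   by uniform continuity and compactness) and work in R^d, d = max(n, m). The first M
   hidden layers collapse the balls one after the other: layer i maps B_{r_i}(c_i) onto
   c_i and is the identity elsewhere, and the condition |c_i - c_j| >= r_i ensures that
   later layers fix a centre once it is reached. The next M layers move the (distinct)
   centres one at a time onto prescribed targets, each by a radial map that is the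
   identity off a single sphere avoiding every other point in play. An affine read-out
   turns the target of c_i into f(c_i), so F(x) = f(c_i) for a ball containing x, and
   |F(x) - f(x)| < eps/2. *)

From HB Require Import structures.
From mathcomp Require Import all_boot all_order all_algebra.
From mathcomp Require Import all_classical all_reals all_analysis.
From mathcomp Require Import ring lra.
Import Order.TTheory GRing.Theory Num.Theory.
Import numFieldNormedType.Exports.
Local Open Scope classical_set_scope.
Local Open Scope ring_scope.
Set Implicit Arguments. Unset Strict Implicit. Unset Printing Implicit Defensive.

Section EuclideanNorm.
Variable R : realType.
Implicit Types (k : nat) (a b : R).

Definition esqnorm k (v : 'cV[R]_k) : R := \sum_(i < k) v i ord0 ^+ 2.
Definition edot k (u v : 'cV[R]_k) : R := \sum_(i < k) u i ord0 * v i ord0.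

Lemma esqnorm_ge0 k (v : 'cV[R]_k) : 0 <= esqnorm v.
Proof. by apply: sumr_ge0 => i _; exact: sqr_ge0. Qed.

Lemma enorm_ge0 k (v : 'cV[R]_k) : 0 <= enorm v.
Proof. exact: sqrtr_ge0. Qed.

Lemma enorm_sqr k (v : 'cV[R]_k) : enorm v ^+ 2 = esqnorm v.
Proof. by rewrite sqr_sqrtr // esqnorm_ge0. Qed.

Lemma esqnorm_eq0 k (v : 'cV[R]_k) : (esqnorm v == 0) = (v == 0).
Proof.
apply/eqP/eqP => [/psumr_eq0P v0|->].
  apply/matrixP => i j; rewrite (ord1 j) mxE; apply/eqP; rewrite -sqrf_eq0.
  by apply/eqP/v0 => // l _; exact: sqr_ge0.
by rewrite /esqnorm big1 // => i _; rewrite mxE expr0n.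
Qed.

Lemma enorm_eq0 k (v : 'cV[R]_k) : (enorm v == 0) = (v == 0).
Proof. by rewrite sqrtr_eq0 le_eqVlt ltNge esqnorm_ge0 orbF esqnorm_eq0. Qed.

Lemma enorm0 k : enorm (0 : 'cV[R]_k) = 0.
Proof. by apply/eqP; rewrite enorm_eq0. Qed.

Lemma enorm_gt0 k (v : 'cV[R]_k) : (0 < enorm v) = (v != 0).
Proof. by rewrite lt_def enorm_ge0 enorm_eq0 andbT. Qed.

Lemma esqnorm_scaleB k a b (u v : 'cV[R]_k) : esqnorm (a *: u - b *: v) =
  a ^+ 2 * esqnorm u - 2 * a * b * edot u v + b ^+ 2 * esqnorm v.
Proof.
rewrite /esqnorm /edot !mulr_sumr -sumrB -big_split /=; apply: eq_bigr => i _.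
by rewrite !mxE; ring.
Qed.

Lemma esqnormD k (u v : 'cV[R]_k) : esqnorm (u + v) = esqnorm u + 2 * edot u v + esqnorm v.
Proof.
have -> : u + v = 1 *: u - (-1) *: v by rewrite scaleN1r opprK scale1r.
by rewrite esqnorm_scaleB; ring.
Qed.

Lemma esqnormZ k a (v : 'cV[R]_k) : esqnorm (a *: v) = a ^+ 2 * esqnorm v.
Proof. by rewrite /esqnorm mulr_sumr; apply: eq_bigr => i _; rewrite mxE exprMn. Qed.

Lemma esqnormN k (v : 'cV[R]_k) : esqnorm (- v) = esqnorm v.
Proof. by rewrite -scaleN1r esqnormZ sqrrN expr1n mul1r. Qed.

Lemma enormN k (v : 'cV[R]_k) : enorm (- v) = enorm v.
Proof. by rewrite /enorm -/(esqnorm _) esqnormN. Qed.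

Lemma enorm_distC k (u v : 'cV[R]_k) : enorm (u - v) = enorm (v - u).
Proof. by rewrite -enormN opprB. Qed.

Lemma edot_sqr_le k (u v : 'cV[R]_k) : edot u v ^+ 2 <= esqnorm u * esqnorm v.
Proof.
have [->|v0] := eqVneq v 0.
  rewrite /edot big1 => [|i _]; last by rewrite mxE mulr0.
  by rewrite expr0n /= mulr_ge0 ?esqnorm_ge0.
have v_gt0 : 0 < esqnorm v by rewrite lt_def esqnorm_eq0 v0 esqnorm_ge0.
have := esqnorm_ge0 (esqnorm v *: u - edot u v *: v); rewrite esqnorm_scaleB.
have := esqnorm_ge0 u; nra.
Qed.

Lemma ler_enormD k (u v : 'cV[R]_k) : enorm (u + v) <= enorm u + enorm v.
Proof.
have [u0 v0] := (enorm_ge0 u, enorm_ge0 v).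
have cs : `|edot u v| <= enorm u * enorm v.
  rewrite -ler_sqr ?nnegrE ?mulr_ge0 // real_normK ?num_real // exprMn !enorm_sqr.
  exact: edot_sqr_le.
rewrite -ler_sqr ?nnegrE ?addr_ge0 ?enorm_ge0 // sqrrD !enorm_sqr esqnormD.
have := ler_norm (edot u v); lra.
Qed.

Lemma ler_edistD k (u v w : 'cV[R]_k) : enorm (v - w) <= enorm (v - u) + enorm (u - w).
Proof. by have := ler_enormD (v - u) (u - w); rewrite addrA subrK. Qed.

Lemma enorm_coord_le k (v : 'cV[R]_k) i : `|v i ord0| <= enorm v.
Proof.
rewrite -sqrtr_sqr ler_sqrt ?esqnorm_ge0 //.
by rewrite /esqnorm (bigD1 i) //= lerDl sumr_ge0 // => j _; exact: sqr_ge0.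
Qed.

End EuclideanNorm.

Section Padding.
Variable R : realType.

(* Zero-padding R^a -> R^b when a <= b, projection onto the first b coordinates otherwise. *)
Definition pad a b : 'M[R]_(b, a) := \matrix_(i, j) ((i : nat) == j)%:R.

Lemma trmx_pad a b : (pad a b)^T = pad b a.
Proof. by apply/matrixP => i j; rewrite !mxE eq_sym. Qed.

Lemma pad_mulmx_pad a b : (a <= b)%N -> pad b a *m pad a b = 1%:M.
Proof.
move=> ab; apply/matrixP => i j; rewrite !mxE (bigD1 (widen_ord ab i)) //=.
rewrite big1 => [|k ki]; last first.
  by rewrite !mxE; case: eqP => [ik|]; [move: ki; rewrite -val_eqE /= ik eqxx | rewrite mul0r].
by rewrite !mxE eqxx mul1r addr0 -val_eqE.
Qed.

Lemma pad_padK a b (v : 'cV[R]_a) : (a <= b)%N -> pad b a *m (pad a b *m v) = v.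
Proof. by move=> ab; rewrite mulmxA pad_mulmx_pad // mul1mx. Qed.

Lemma esqnorm_mx k (v : 'cV[R]_k) : esqnorm v = (v^T *m v) ord0 ord0.
Proof. by rewrite !mxE; apply: eq_bigr => i _; rewrite mxE expr2. Qed.

Lemma enorm_pad a b (v : 'cV[R]_a) : (a <= b)%N -> enorm (pad a b *m v) = enorm v.
Proof.
move=> ab; congr Num.sqrt; rewrite -!/(esqnorm _) !esqnorm_mx trmx_mul trmx_pad.
by rewrite mulmxA -(mulmxA v^T) pad_mulmx_pad // mulmx1.
Qed.

End Padding.

Section RadialMaps.
Variable R : realType.

Definition splice (s v : R) (g1 g2 : R -> R) (t : R) : R :=
  if t < s then g1 t else if s < t then g2 t else v.

Lemma piecewise_diff_splice s v (g1 g2 : R -> R) :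
  (forall x, derivable g1 x 1) -> (forall x, derivable g2 x 1) ->
  piecewise_diff (splice s v g1 g2).
Proof.
move=> d1 d2; exists [:: s] => x; rewrite inE => xs.
have [xs_lt|sx_le] := ltP x s.
  apply: (near_eq_derivable _ (d1 x)).
  have : x \in `]-oo, s[ by rewrite in_itv.
  by move=> /near_in_itvNyo; apply: filterS => z; rewrite in_itv /= /splice => ->.
have sx : s < x by rewrite lt_neqAle sx_le eq_sym xs.
apply: (near_eq_derivable _ (d2 x)).
have : x \in `]s, +oo[ by rewrite in_itv /= sx.
move=> /near_in_itvoy; apply: filterS => z; rewrite in_itv /= andbT /splice => sz.
by rewrite sz ltNge (ltW sz).
Qed.

Lemma piecewise_diff_id : piecewise_diff (fun t : R => t).
Proof. by exists [::] => x _; exact: derivable_id. Qed.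

Lemma radialE k (h : R -> R) (v : 'cV[R]_k) :
  v != 0 -> radial h v = (h (enorm v) / enorm v) *: v.
Proof. by rewrite /radial => /negbTE ->. Qed.

Lemma radial_eq_self k (h : R -> R) (v : 'cV[R]_k) :
  h (enorm v) = enorm v -> radial h v = v.
Proof.
have [->|v0 hv] := eqVneq v 0; first by rewrite /radial eqxx.
by rewrite radialE // hv divff ?scale1r // gt_eqF ?enorm_gt0.
Qed.

Lemma radial_eq0 k (h : R -> R) (v : 'cV[R]_k) : h (enorm v) = 0 -> radial h v = 0.
Proof. by rewrite /radial; case: eqP => // _ ->; rewrite mul0r scale0r. Qed.

Lemma radial_id k (v : 'cV[R]_k) : radial id v = v.
Proof. exact: radial_eq_self. Qed.

(* A hidden layer computes [cradial_eval] up to the translation by the centre, which the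
   bias of the following layer undoes. *)
Record cradial d := CRadial {
  centre : 'cV[R]_d;
  profile : R -> R;
  profileP : piecewise_diff profile }.

Definition cradial_eval d (b : cradial d) (z : 'cV[R]_d) : 'cV[R]_d :=
  centre b + radial (profile b) (z - centre b).

Definition cradial_chain d (bs : seq (cradial d)) (z : 'cV[R]_d) : 'cV[R]_d :=
  foldl (fun z b => cradial_eval b z) z bs.

Lemma cradial_chain_fixed d (I : eqType) (s : seq I) (g : I -> cradial d) z :
  {in s, forall i, cradial_eval (g i) z = z} -> cradial_chain (map g s) z = z.
Proof.
elim: s => //= i s IH s_fix.
by rewrite s_fix ?mem_head // IH // => j js; rewrite s_fix // inE js orbT.
Qed.

End RadialMaps.

Section ChainNetworks.
Variable R : realType.

Lemma rnet_cradial_chain a d m (bs : seq (cradial R d)) (W : 'M[R]_(d, a))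
    (w : 'cV[R]_d) (P : 'M[R]_(m, d)) (p : 'cV[R]_m) :
  exists N : rnet R a m,
    (forall x, rnet_eval N x = P *m cradial_chain bs (W *m x + w) + p) /\
    rnet_widths N = a :: rcons (nseq (size bs) d) m.
Proof.
elim: bs a W w => [|b bs IH] a W w.
  exists (RNLast (RLayer (P *m W) (P *m w + p) (@piecewise_diff_id R))).
  by split => // x; rewrite /= /rlayer_eval radial_id mulmxDr mulmxA addrA.
have [N [NE Nw]] := IH d 1%:M (centre b).
exists (RNCons (RLayer W (w - centre b) (profileP b)) N); split; last by rewrite /= Nw.
move=> x /=; rewrite NE /rlayer_eval /= mul1mx addrA [radial _ _ + _]addrC.
by rewrite /cradial_eval.
Qed.

Lemma hidden_widths_nseq a b d k (N : rnet R a b) :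
  rnet_widths N = a :: rcons (nseq k d) b -> hidden_widths N = nseq k d.
Proof.
by rewrite /hidden_widths => -> /=; rewrite size_rcons -cats1 take_size_cat ?size_nseq.
Qed.

End ChainNetworks.

Section Avoidance.
Variable R : realType.

Lemma exists_pos_notin (s : seq R) : exists2 x, 0 < x & x \notin s.
Proof.
have le_sum y : y \in s -> `|y| <= \sum_(z <- s) `|z|.
  by move=> ys; rewrite (big_rem _ ys) /= lerDl sumr_ge0.
have sum_ge0 : 0 <= \sum_(z <- s) `|z| by apply: sumr_ge0.
exists (1 + \sum_(z <- s) `|z|); first by rewrite ltr_pwDl.
by apply/negP => /le_sum; rewrite ger0_norm ?addr_ge0 //; lra.
Qed.

Lemma exists_cV_notin k (s : seq 'cV[R]_k) : (0 < k)%N -> exists v, v \notin s.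
Proof.
move=> k_gt0; pose i0 := Ordinal k_gt0.
have [x _ xs] := exists_pos_notin [seq (v : 'cV[R]_k) i0 ord0 | v <- s].
exists (const_mx x); apply: contra xs => xs.
by apply/mapP; exists (const_mx x); rewrite ?mxE.
Qed.

End Avoidance.

Section Collapse.
Variables (R : realType) (d : nat).

Definition collapse (c : 'cV[R]_d) (r : R) : cradial R d :=
  CRadial c (piecewise_diff_splice r r (fun x => @derivable_cst R R R 0 x 1)
                                     (fun x => @derivable_id R R x 1)).

Lemma collapse_in c r z : enorm (z - c) < r -> cradial_eval (collapse c r) z = c.
Proof. by move=> zr; rewrite /cradial_eval radial_eq0 ?addr0 //= /splice zr. Qed.

Lemma collapse_out c r z : r <= enorm (z - c) -> cradial_eval (collapse c r) z = z.
Proof.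
move=> zr; rewrite /cradial_eval radial_eq_self ?[c + _]addrC ?subrK //=.
by rewrite /splice ltNge zr /=; case: ltgtP zr.
Qed.

Lemma cradial_chain_collapse (I : eqType) (s : seq I) (c : I -> 'cV[R]_d) (r : I -> R) z :
  {in s &, forall i j, i != j -> r i <= enorm (c i - c j)} ->
  (exists2 i, i \in s & enorm (z - c i) < r i) ->
  exists2 j, j \in s &
    enorm (z - c j) < r j /\ cradial_chain [seq collapse (c i) (r i) | i <- s] z = c j.
Proof.
elim: s z => [|i0 s IH] z sep [i]; rewrite ?in_nil // inE => i_in zi.
have sep_s : {in s &, forall i j, i != j -> r i <= enorm (c i - c j)}.
  by move=> i' j i_s j_s; apply: sep; rewrite inE ?i_s ?j_s orbT.
have [zi0|zi0] := ltP (enorm (z - c i0)) (r i0); last first.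
  have i_s : i \in s by case/predU1P: i_in zi => [-> /lt_geF/negbT/negP|].
  rewrite /= collapse_out //; have [j j_s] := IH z sep_s (ex_intro2 _ _ i i_s zi).
  by exists j; rewrite // inE j_s orbT.
exists i0; rewrite ?mem_head //; split => //=.
rewrite collapse_in // cradial_chain_fixed // => j j_s.
have [->|ji0] := eqVneq j i0.
  by rewrite collapse_in // subrr enorm0 (le_lt_trans (enorm_ge0 _) zi0).
by rewrite collapse_out // enorm_distC sep ?mem_head // inE j_s orbT.
Qed.

End Collapse.

Section Moves.
Variables (R : realType) (d : nat).

(* The centre is a = p + th (q - p) and the profile is the identity except at the radius
   s = |p - a|, where its value s (th - 1) / th sends p to q. A point y <> p of Y lies on
   that sphere only if th = |y - p|^2 / (2 <y - p, q - p>), so a suitable th exists. *)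
Lemma exists_cradial_move (p q : 'cV[R]_d) (Y : seq 'cV[R]_d) :
  q != p -> p \notin Y ->
  exists b : cradial R d, cradial_eval b p = q /\ {in Y, forall y, cradial_eval b y = y}.
Proof.
move=> qp pY; set w := q - p.
have w0 : w != 0 by rewrite subr_eq0.
have [th th_gt0 th_good] :=
  exists_pos_notin [seq esqnorm (y - p) / (2 * edot (y - p) w) | y <- Y].
set a := p + th *: w.
have pa : p - a = - (th *: w) by rewrite opprD addrA subrr add0r.
set s := enorm (p - a).
have s_gt0 : 0 < s by rewrite enorm_gt0 pa oppr_eq0 scaler_eq0 negb_or w0 gt_eqF.
have off_sphere y : y \in Y -> enorm (y - a) != s.
  move=> yY; apply/eqP => /(congr1 (fun t => t ^+ 2)); rewrite !enorm_sqr.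
  have -> : y - a = 1 *: (y - p) - th *: w by rewrite scale1r opprD addrA.
  rewrite pa esqnormN esqnorm_scaleB esqnormZ expr1n !mul1r mulr1 => sph.
  have {}sph : esqnorm (y - p) = 2 * th * edot (y - p) w by lra.
  have [dot0|dot_neq0] := eqVneq (edot (y - p) w) 0.
    move: sph; rewrite dot0 mulr0 => /eqP; rewrite esqnorm_eq0 subr_eq0 => /eqP yp.
    by move: pY; rewrite -yp yY.
  move/negP: th_good; apply; apply/mapP; exists y => //.
  by rewrite sph; field.
exists (CRadial a (piecewise_diff_splice s (s * ((th - 1) / th))
                    (fun x => @derivable_id R R x 1) (fun x => @derivable_id R R x 1))).
split.
  rewrite /cradial_eval radialE -/s /=; last by rewrite -enorm_gt0.
  rewrite /splice ltxx [s * _]mulrC mulfK ?gt_eqF // pa scalerN scalerA mulfVK ?gt_eqF //.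
  by rewrite /a scalerBl scale1r opprB addrCA addrK /w subrK.
move=> y yY; rewrite /cradial_eval radial_eq_self ?[a + _]addrC ?subrK //=.
by rewrite /splice; case: ltgtP (off_sphere y yY) => //; rewrite eqxx.
Qed.

Lemma exists_cradial_chain_moves (I : eqType) (s : seq I) (p q : I -> 'cV[R]_d)
    (Z : seq 'cV[R]_d) :
  uniq (map p s) -> {in s &, forall i j, q i != p j} -> {in Z & s, forall z j, z != p j} ->
  exists ms : seq (cradial R d), [/\ size ms = size s,
    {in s, forall j, cradial_chain ms (p j) = q j} & {in Z, forall z, cradial_chain ms z = z}].
Proof.
elim: s Z => [|i s IH] Z; first by exists [::].
rewrite map_cons cons_uniq => /andP[pi_notin p_uniq] qp Zp.
have [b [b_pi b_fix]] : exists b : cradial R d,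
    cradial_eval b (p i) = q i /\ {in Z ++ map p s, forall y, cradial_eval b y = y}.
  apply: exists_cradial_move; first by rewrite qp ?mem_head.
  by rewrite mem_cat negb_or pi_notin andbT; apply/negP => /Zp/(_ (mem_head i s))/eqP.
have s_sub : {subset s <= i :: s} by move=> j js; rewrite inE js orbT.
have qiZ_p : {in q i :: Z & s, forall z j, z != p j}.
  move=> z j; rewrite inE => /predU1P[-> js|zZ js].
    exact: qp (mem_head i s) (s_sub j js).
  exact: Zp zZ (s_sub j js).
have [ms [size_ms ms_move ms_fix]] := IH (q i :: Z) p_uniq (sub_in2 s_sub qp) qiZ_p.
exists (b :: ms); split; first by rewrite /= size_ms.
  move=> j; rewrite inE => /predU1P[->|js] /=; first by rewrite b_pi ms_fix ?mem_head.
  by rewrite b_fix ?ms_move // mem_cat map_f ?orbT.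
by move=> z zZ /=; rewrite b_fix ?ms_fix // ?mem_cat ?zZ // inE zZ orbT.
Qed.

End Moves.

Section Compactness.
Variable R : realType.

Lemma ball_of_enorm_lt k (x y : 'cV[R]_k) e : enorm (x - y) < e -> ball x e y.
Proof.
move=> xy; split => [|i j]; first exact: le_lt_trans (enorm_ge0 _) xy.
rewrite /ball /= (ord1 j); apply: le_lt_trans xy.
by have := enorm_coord_le (x - y) i; rewrite !mxE.
Qed.

Lemma enorm_lt_of_ball k (x y : 'cV[R]_k) e : ball x e y -> enorm (x - y) < e * k.+1%:R.
Proof.
move=> [e_gt0 xy]; have e_k_gt0 : 0 < e * k.+1%:R by rewrite mulr_gt0.
rewrite -ltr_sqr ?nnegrE ?enorm_ge0 ?ltW // enorm_sqr.
apply: (@le_lt_trans _ _ (\sum_(i < k) e ^+ 2)).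
  rewrite /esqnorm; apply: ler_sum => i _; rewrite !mxE.
  rewrite -[(_ - _) ^+ 2]real_normK ?num_real // ler_sqr ?nnegrE ?(ltW e_gt0) //.
  exact: ltW (xy i ord0).
rewrite sumr_const card_ord -[_ *+ k]mulr_natr exprMn ltr_pM2l ?exprn_gt0 //.
by rewrite -natrX ltr_nat expnS expn1 leq_pmull.
Qed.

Lemma within_continuous_enorm n m (K : set 'cV[R]_n) (f : 'cV[R]_n -> 'cV[R]_m) x e :
  {within K, continuous f} -> K x -> 0 < e ->
  exists2 t, 0 < t & forall y, K y -> ball x t y -> enorm (f x - f y) < e.
Proof.
move=> /subspace_continuousP fc Kx e_gt0.
have e'_gt0 : 0 < e / m.+1%:R by rewrite divr_gt0.
have := fc x Kx _ (nbhsx_ballx (f x) _ e'_gt0).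
rewrite /= nbhs_simpl /within /= => /nbhs_ballP[t t_gt0 ft]; exists t => // y Ky xy.
by have := enorm_lt_of_ball (ft y xy Ky); rewrite mulfVK // pnatr_eq0.
Qed.

Lemma compact_unif_continuous n m (K : set 'cV[R]_n) (f : 'cV[R]_n -> 'cV[R]_m) e :
  compact K -> {within K, continuous f} -> 0 < e ->
  exists2 t, 0 < t & forall y z, K y -> K z -> enorm (y - z) < t -> enorm (f y - f z) < e.
Proof.
move=> cK fc e_gt0; have e2_gt0 : 0 < e / 2 by rewrite divr_gt0.
have local_t x : exists tx, 0 < tx /\
    (K x -> forall y, K y -> ball x tx y -> enorm (f x - f y) < e / 2).
  have [Kx|] := pselect (K x); last by exists 1.
  by have [tx ? ?] := within_continuous_enorm fc Kx e2_gt0; exists tx.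
have [t t_ok] := choice local_t.
have K_cover : K `<=` cover K (fun x => ball x (t x / 2)).
  by move=> x Kx; exists x => //; apply: ballxx; rewrite divr_gt0 ?(t_ok x).1.
move: cK; rewrite compact_cover.
move=> /(_ _ K _ (fun x _ => ball_open _ _) K_cover)[D DK Dcover].
pose l := \big[Num.min/1]_(x <- finmap.enum_fset D) (t x / 2).
have l_gt0 : 0 < l.
  rewrite /l; elim/big_ind: _ => // [a b a0 b0|x _]; first by rewrite lt_min a0 b0.
  by rewrite divr_gt0 ?(t_ok x).1.
exists l => // y z Ky Kz yz.
have [x /= xD xy] := Dcover y Ky.
have Kx : K x by have := DK x xD; rewrite inE.
have l_le : l <= t x / 2 by exact: ge_bigmin_seq.
have xz : ball x (t x) z.
  apply: le_ball (ball_triangle xy (ball_of_enorm_lt yz)).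
  by move: l_le; rewrite [leRHS]splitr; lra.
have xy' : ball x (t x) y.
  by apply: le_ball xy; rewrite ler_pdivrMr // ler_peMr ?ler1n ?(ltW (t_ok x).1).
have := ler_edistD (f x) (f y) (f z); rewrite [enorm (f y - f x)]enorm_distC.
by have := (t_ok x).2 Kx y Ky xy'; have := (t_ok x).2 Kx z Kz xz; lra.
Qed.

Definition separated_seq k (t : R) (s : seq 'cV[R]_k) :=
  {in s &, forall x y, x != y -> t <= enorm (x - y)}.

Lemma compact_separated_size n (K : set 'cV[R]_n) t : compact K -> 0 < t ->
  exists N, forall s, uniq s -> {in s, forall x, K x} -> separated_seq t s -> (size s <= N)%N.
Proof.
move=> cK t_gt0; set rho := t / 2 / n.+1%:R.
have rho_gt0 : 0 < rho by rewrite !divr_gt0.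
have K_cover : K `<=` cover K (fun x => ball x rho).
  by move=> x Kx; exists x => //; exact: ballxx.
move: cK; rewrite compact_cover.
move=> /(_ _ K _ (fun x _ => ball_open _ _) K_cover)[D _ Dcover].
exists (size (finmap.enum_fset D)) => s s_uniq sK s_sep.
have near_D x : exists y, x \in s -> y \in finmap.enum_fset D /\ ball y rho x.
  have [xs|] := boolP (x \in s); last by exists 0.
  by have [y /= yD yx] := Dcover x (sK x xs); exists y.
have [g g_ok] := choice near_D.
(* two points of [s] in a common ball of radius [rho] are closer than [t] *)
have g_inj : {in s &, injective g}.
  move=> x y xs ys gxy; apply/eqP/contraT => /(s_sep x y xs ys).
  have [_ gx] := g_ok x xs; have [_ gy] := g_ok y ys.
  have := ler_edistD (g x) x y; rewrite [enorm (x - g x)]enorm_distC.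
  have := enorm_lt_of_ball gx; have := enorm_lt_of_ball gy.
  by rewrite /rho mulfVK ?pnatr_eq0 // gxy; lra.
rewrite -(size_map g); apply: uniq_leq_size; first by rewrite map_inj_in_uniq.
by move=> _ /mapP[x xs ->]; have [] := g_ok x xs.
Qed.

(* A maximal t-separated sequence in K is a t-net of K; it is reached greedily since
   t-separated sequences in K have bounded length. *)
Lemma compact_separated_net n (K : set 'cV[R]_n) t : compact K -> 0 < t ->
  exists s, [/\ uniq s, {in s, forall x, K x}, separated_seq t s &
    forall x, K x -> exists2 c, c \in s & enorm (x - c) < t].
Proof.
move=> cK t_gt0; have [N sizeN] := compact_separated_size cK t_gt0.
apply: contrapT => no_net.
suff [s [s_uniq sK s_sep s_size]] : exists s, [/\ uniq s, {in s, forall x, K x},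
    separated_seq t s & size s = N.+1].
  by have := sizeN s s_uniq sK s_sep; rewrite s_size ltnn.
elim: N.+1 => [|k [s [s_uniq sK s_sep <-]]]; first by exists [::].
have [x Kx x_far] : exists2 x, K x & forall c, c \in s -> t <= enorm (x - c).
  apply: contrapT => no_far; apply: no_net; exists s; split => // x Kx.
  apply: contrapT => x_far; apply: no_far; exists x => // c cs.
  by rewrite leNgt; apply/negP => xc; apply: x_far; exists c.
have x_notin : x \notin s by apply/negP => /x_far; rewrite subrr enorm0 leNgt t_gt0.
exists (x :: s); split => //=; first by rewrite x_notin.
  by move=> y; rewrite inE => /predU1P[->|/sK].
move=> y z; rewrite !inE => /predU1P[->|ys] /predU1P[->|zs]; rewrite ?eqxx //.
- by move=> _; apply: x_far.
- by move=> _; rewrite enorm_distC; apply: x_far.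
- exact: s_sep.
Qed.

Lemma cover_ok_exists n m (K : set 'cV[R]_n) (f : 'cV[R]_n -> 'cV[R]_m) delta :
  compact K -> {within K, continuous f} -> 0 < delta -> exists M, cover_ok f K delta M.
Proof.
move=> cK fc delta_gt0.
have [t t_gt0 f_ucont] := compact_unif_continuous cK fc delta_gt0.
set t1 := Num.min t (1 / 2).
have t1_gt0 : 0 < t1 by rewrite lt_min t_gt0 divr_gt0.
have t1_lt1 : t1 < 1 by rewrite gt_min orbC ltr_pdivrMr // mul1r ltr1n.
have [s [s_uniq sK s_sep s_net]] := compact_separated_net cK t1_gt0.
have nth_s (i : 'I_(size s)) : nth 0 s i \in s by rewrite mem_nth.
exists (size s), (fun i => nth 0 s i), (fun _ => t1); split.
- by move=> i; apply/sK/nth_s.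
- by move=> i; rewrite t1_gt0.
- move=> x Kx; have [c cs xc] := s_net x Kx.
  have c_idx : (index c s < size s)%N by rewrite index_mem.
  by exists (Ordinal c_idx); rewrite /= ?nth_index.
- move=> i _ [y [yc Ky] <-]; apply: f_ucont => //; first exact/sK/nth_s.
  by apply: lt_le_trans yc _; rewrite ge_min lexx.
- move=> i j ij; apply: s_sep => //.
  by rewrite nth_uniq // -val_eqE in ij *.
Qed.

Lemma Mcover_ok n m (K : set 'cV[R]_n) (f : 'cV[R]_n -> 'cV[R]_m) delta :
  (exists M, cover_ok f K delta M) -> cover_ok f K delta (Mcover f K delta).
Proof. by rewrite /Mcover; case: pselect => // ex _; case: ex_minnP => M /asboolP. Qed.

End Compactness.

Section PiecewiseConstant.
Variable R : realType.

Lemma exists_cradial_chain_readout d m (I : eqType) (s : seq I) (p : I -> 'cV[R]_d)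
    (g : I -> 'cV[R]_m) :
  (m <= d)%N -> uniq (map p s) ->
  exists (bias : 'cV[R]_m) (ms : seq (cradial R d)), size ms = size s /\
    {in s, forall j, pad R d m *m cradial_chain ms (p j) + bias = g j}.
Proof.
move=> md p_uniq; have [m0|m_gt0] := posnP m.
  exists 0, (nseq (size s) (collapse 0 1)); rewrite size_nseq; split => // j _.
  by move: (g j) (_ + _); rewrite m0 => ? ?; rewrite !flatmx0.
(* a bias outside these differences keeps every target [q i] off every point [p j] *)
have [bias bias_notin] :=
  exists_cV_notin [seq g i - pad R d m *m p j | i <- s, j <- s] m_gt0.
pose q i := pad R m d *m (g i - bias).
have qp : {in s &, forall i j, q i != p j}.
  move=> i j i_s j_s; apply: contraNneq bias_notin => qp.
  apply/allpairsP; exists (i, j); split => //=.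
  by rewrite -qp pad_padK // opprB addrC subrK.
have nil_p : {in [::] & s, forall z j, z != p j} by [].
have [ms [size_ms ms_move _]] := exists_cradial_chain_moves p_uniq qp nil_p.
exists bias, ms; split => // j j_s.
by rewrite ms_move // pad_padK // subrK.
Qed.

Lemma rnet_piecewise_const n m d M (c : 'I_M -> 'cV[R]_n) (r : 'I_M -> R)
    (g : 'I_M -> 'cV[R]_m) :
  (n <= d)%N -> (m <= d)%N -> (forall i, 0 < r i) ->
  (forall i j, i != j -> r i <= enorm (c i - c j)) ->
  exists N : rnet R n m, hidden_widths N = nseq (2 * M) d /\
    forall x, (exists i, eball (c i) (r i) x) ->
      exists2 i, eball (c i) (r i) x & rnet_eval N x = g i.
Proof.
move=> nd md r_gt0 sep.
pose cc i := pad R n d *m c i.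
have dist_cc i j : enorm (cc i - cc j) = enorm (c i - c j) by rewrite -mulmxBr enorm_pad.
have cc_uniq : uniq (map cc (enum 'I_M)).
  rewrite map_inj_uniq ?enum_uniq // => i j; apply: contra_eq => ij.
  by rewrite -subr_eq0 -enorm_gt0 dist_cc (lt_le_trans (r_gt0 i)) ?sep.
have [bias [ms [size_ms ms_readout]]] := exists_cradial_chain_readout g md cc_uniq.
have [N [NE Nwidths]] := rnet_cradial_chain
  ([seq collapse (cc i) (r i) | i <- enum 'I_M] ++ ms) (pad R n d) 0 (pad R d m) bias.
exists N; split.
  apply: hidden_widths_nseq.
  by rewrite Nwidths size_cat size_map size_ms size_enum_ord mul2n addnn.
have sep_cc : {in enum 'I_M &, forall i j, i != j -> r i <= enorm (cc i - cc j)}.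
  by move=> i j _ _ ij; rewrite dist_cc sep.
move=> x [i xi]; rewrite NE addr0 /cradial_chain foldl_cat -!/(cradial_chain _ _).
have x_in : exists2 i, i \in enum 'I_M & enorm (pad R n d *m x - cc i) < r i.
  by exists i; rewrite ?mem_enum // -mulmxBr enorm_pad.
have [j _ [xj ->]] := cradial_chain_collapse sep_cc x_in.
by exists j; [move: xj; rewrite -mulmxBr enorm_pad | rewrite ms_readout ?mem_enum].
Qed.

End PiecewiseConstant.

Unset Implicit Arguments. Set Strict Implicit. Set Printing Implicit Defensive.

Theorem theorem6 (R : realType) (n m : nat) (K : set 'cV[R]_n)
    (f : 'cV[R]_n -> 'cV[R]_m) (eps : R) :
  (2 <= n)%N -> compact K -> {within K, continuous f} -> 0 < eps ->
  exists F : 'cV[R]_n -> 'cV[R]_m,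
    (exists N : rnet R n m,
        F = rnet_eval N /\
        hidden_widths N = nseq (2 * Mcover f K (eps / 2)) (maxn n m)) /\
    (forall x, K x -> enorm (F x - f x) < eps).
Proof.
(* The construction works in every dimension. *)
move=> _ cK fc eps_gt0; have eps2_gt0 : 0 < eps / 2 by rewrite divr_gt0.
have [c [r [_ r01 K_cover f_ball sep]]] := Mcover_ok (cover_ok_exists cK fc eps2_gt0).
have r_gt0 i : 0 < r i by case/andP: (r01 i).
have [N [N_widths N_const]] :=
  rnet_piecewise_const (fun i => f (c i)) (leq_maxl n m) (leq_maxr n m) r_gt0 sep.
exists (rnet_eval N); split; first by exists N.
move=> x Kx; have [i _ xi] := K_cover x Kx.
have [j xj ->] := N_const x (ex_intro _ i xi).
have := f_ball j (f x) (ex_intro2 _ _ x (conj xj Kx) erefl).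
by rewrite /eball /= enorm_distC; lra.
Qed.
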